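(* Let $R$ be a semisimple 2-primal ring. Then $R$ satisfies the complete radical formula, i.e., for every left $R$-module $M$ and every submodule $N$ of $M$, $\langle E_M(N)\rangle=\beta^s_{co}(N)$.
   Context: Rings are associative with identity; modules are unital left modules. $R$ is semisimple if ${}_RR$ is a direct sum of simple submodules; $R$ is 2-primal if its set of nilpotent elements equals its prime radical. A submodule $P$ of $M$ is completely prime if $RM\not\subseteq P$ and for $r\in R$, $m\in M$, $rm\in P$ implies $m\in P$ or $rM\subseteq P$. $\beta^s_{co}(N)$ is the intersection of all completely prime submodules of $M$ containing $N$ ($=M$ if none). $E_M(N)=\{rm: r\in R, m\in M, r^km\in N\text{ for some }k\in\mathbb N\}$ and $\langle E_M(N)\rangle$ is the submodule it generates. *)

From HB Require Import structures.
From mathcomp Require Import all_boot all_order all_algebra.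
From Stdlib Require Import List.
Set Implicit Arguments. Unset Strict Implicit. Unset Printing Implicit Defensive.
Import GRing.Theory.
Local Open Scope ring_scope.

Definition is_submodule (R : pzRingType) (M : lmodType R) (N : M -> Prop) : Prop :=
  [/\ N 0, (forall x y, N x -> N y -> N (x + y)) & (forall (r : R) x, N x -> N (r *: x))].

Definition gen_submodule (R : pzRingType) (M : lmodType R) (S : M -> Prop) : M -> Prop :=
  fun x => forall N : M -> Prop, is_submodule N -> (forall y, S y -> N y) -> N x.

Definition is_left_ideal (R : pzRingType) (I : R -> Prop) : Prop :=
  [/\ I 0, (forall x y, I x -> I y -> I (x + y)) & (forall r x, I x -> I (r * x))].

Definition is_ideal (R : pzRingType) (I : R -> Prop) : Prop :=
  is_left_ideal I /\ (forall r x, I x -> I (x * r)).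

Definition simple_left_ideal (R : pzRingType) (I : R -> Prop) : Prop :=
  [/\ is_left_ideal I, (exists x, I x /\ x <> 0) &
      (forall J : R -> Prop, is_left_ideal J -> (forall x, J x -> I x) ->
         (forall x, J x -> x = 0) \/ (forall x, I x -> J x))].

(* _R R is the (internal) direct sum of the family of simple left ideals L *)
Definition semisimple_ring (R : pzRingType) : Prop :=
  exists (J : Type) (L : J -> R -> Prop),
    (forall j, simple_left_ideal (L j)) /\
    (forall r : R, exists (s : list J) (x : J -> R),
        NoDup s /\ (forall j, In j s -> L j (x j)) /\
        r = \sum_(j <- s) x j) /\
    (forall (s : list J) (x : J -> R),
        NoDup s -> (forall j, In j s -> L j (x j)) ->
        \sum_(j <- s) x j = 0 -> forall j, In j s -> x j = 0).

Definition nilpotent_elt (R : pzRingType) (a : R) : Prop := exists n : nat, a ^+ n = 0.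

Definition prime_ideal (R : pzRingType) (P : R -> Prop) : Prop :=
  [/\ is_ideal P, ~ P 1 &
      (forall a b, (forall r, P (a * r * b)) -> P a \/ P b)].

Definition prime_radical (R : pzRingType) : R -> Prop :=
  fun a => forall P, prime_ideal P -> P a.

Definition two_primal (R : pzRingType) : Prop :=
  forall a : R, nilpotent_elt a <-> prime_radical a.

Definition completely_prime (R : pzRingType) (M : lmodType R) (P : M -> Prop) : Prop :=
  [/\ is_submodule P,
      (exists (r : R) (m : M), ~ P (r *: m)) &
      (forall (r : R) (m : M), P (r *: m) -> P m \/ (forall m' : M, P (r *: m')))].

Definition beta_co (R : pzRingType) (M : lmodType R) (N : M -> Prop) : M -> Prop :=
  fun x => forall P, completely_prime P -> (forall y, N y -> P y) -> P x.

Definition E_M (R : pzRingType) (M : lmodType R) (N : M -> Prop) : M -> Prop :=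
  fun x => exists (r : R) (m : M) (k : nat), x = r *: m /\ N (r ^+ k *: m).

Definition complete_radical_formula (R : pzRingType) : Prop :=
  forall (M : lmodType R) (N : M -> Prop), is_submodule N ->
    forall x : M, gen_submodule (E_M N) x <-> beta_co N x.

(** In a 2-primal ring every nilpotent element lies in the annihilator of each
    simple left ideal, since such annihilators are prime ideals; as 1 is a sum
    of elements of simple left ideals, a semisimple 2-primal ring is reduced.
    Writing 1 = e_1 + ... + e_n with e_i in the simple summand L_i, uniqueness
    of the decomposition makes the e_i idempotent, hence central in a reduced
    ring, and simplicity of L_i gives for every r either e_i r = 0 or
    e_i ∈ R e_i r.  Consequently, for a submodule N, each {m | e_i m ∈ N} that
    is proper is completely prime and contains N, so every x ∈ β_co(N) has all
    components e_i x in N, i.e. β_co(N) = N ⊆ ⟨E_M(N)⟩.  The reverse inclusion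
    holds over any ring: r^k m ∈ P forces r m ∈ P for completely prime P. *)

From mathcomp Require Import all_boot all_order all_algebra.
From Stdlib Require List.
From Stdlib Require Import Classical ClassicalEpsilon.
Set Implicit Arguments. Unset Strict Implicit. Unset Printing Implicit Defensive.
Import GRing.Theory.
Local Open Scope ring_scope.

Lemma big_ind_In (V : Type) (P : V -> Prop) (op : V -> V -> V) (idx : V)
    (T : Type) (s : list T) (F : T -> V) :
  P idx -> (forall x y, P x -> P y -> P (op x y)) ->
  (forall j, List.In j s -> P (F j)) -> P (\big[op/idx]_(j <- s) F j).
Proof.
move=> Pidx Pop; elim: s => [|j s IHs] PF; first by rewrite big_nil.
rewrite big_cons; apply: Pop; first by apply: PF; left.
by apply: IHs => k sk; apply: PF; right.
Qed.

Lemma big1_In (V : nmodType) (T : Type) (s : list T) (F : T -> V) :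
  (forall j, List.In j s -> F j = 0) -> \sum_(j <- s) F j = 0.
Proof. by apply: (big_ind_In (P := fun v => v = 0)) => // x y -> ->; rewrite addr0. Qed.

Lemma big_delta_In (V : nmodType) (T : Type) (s : list T) (i : T) (a : V) :
  List.NoDup s -> List.In i s ->
  \sum_(k <- s) (if excluded_middle_informative (k = i) then a else 0) = a.
Proof.
elim: s => [|k s IHs] ks_uniq i_ks; first by [].
have /List.NoDup_cons_iff [k_s s_uniq] := ks_uniq; rewrite big_cons.
case: excluded_middle_informative => [ki | ki]; first subst i.
  rewrite big1_In ?addr0 // => j sj.
  by case: excluded_middle_informative => // jk; rewrite jk in sj.
by rewrite add0r IHs //; case: i_ks.
Qed.

Section LeftIdeals.
Variable R : pzRingType.
Implicit Types (L : R -> Prop) (a b c l r y : R).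

Lemma left_idealB L x y : is_left_ideal L -> L x -> L y -> L (x - y).
Proof. by case=> _ LD LM Lx Ly; rewrite -mulN1r; apply/LD/LM. Qed.

Lemma principal_left_ideal y : is_left_ideal (fun z => exists c, z = c * y).
Proof.
split; first by exists 0; rewrite mul0r.
  by move=> _ _ [c ->] [d ->]; exists (c + d); rewrite mulrDl.
by move=> r _ [c ->]; exists (r * c); rewrite mulrA.
Qed.

Lemma simple_left_ideal_cyclic L y :
  simple_left_ideal L -> L y -> y <> 0 -> forall l, L l -> exists c, l = c * y.
Proof.
case=> [[_ _ LM] _ L_simple] Ly y_neq0.
have Ry_sub_L z : (exists c, z = c * y) -> L z by case=> c ->; apply: LM.
case: (L_simple _ (principal_left_ideal y) Ry_sub_L) => // Ry0.
by case: y_neq0; apply: Ry0; exists 1; rewrite mul1r.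
Qed.

Definition left_ann L : R -> Prop := fun a => forall l, L l -> a * l = 0.

Lemma left_ann_simple_prime L : simple_left_ideal L -> prime_ideal (left_ann L).
Proof.
move=> L_simple; have [[_ _ LM] [l0 [Ll0 l0_neq0]] _] := L_simple.
split.
- split; first split.
  + by move=> l _; rewrite mul0r.
  + by move=> a b annA annB l Ll; rewrite mulrDl annA // annB // addr0.
  + by move=> r a annA l Ll; rewrite -mulrA annA // mulr0.
  + by move=> r a annA l Ll; rewrite -mulrA; apply: annA; apply: LM.
- by move=> ann1; apply: l0_neq0; rewrite -(mul1r l0) ann1.
- move=> a b annARB; case: (classic (left_ann L b)) => [|annB]; first by right.
  left; have [l not_annB_l] := not_all_ex_not _ _ annB.
  have [Ll bl_neq0] := imply_to_and _ _ not_annB_l.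
  move=> y /(simple_left_ideal_cyclic L_simple (LM b l Ll) bl_neq0) [c ->].
  by rewrite !mulrA; apply: annARB.
Qed.

Definition reduced : Prop := forall a, nilpotent_elt a -> a = 0.

Lemma reduced_idempotent_central e : reduced -> e * e = e -> forall r, GRing.comm e r.
Proof.
move=> R_reduced ee r.
have eeK z : z * e * e = z * e by rewrite -mulrA ee.
have er_ere : e * r = e * r * e.
  apply/subr0_eq/R_reduced; exists 2%N.
  by rewrite expr2 mulrBl !mulrBr !mulrA !eeK !subrr.
have re_ere : r * e = e * r * e.
  apply/subr0_eq/R_reduced; exists 2%N.
  by rewrite expr2 mulrBl !mulrBr !mulrA !eeK !subrr.
by rewrite /GRing.comm er_ere re_ere.
Qed.

Lemma central_simple_left_ideal_dichotomy L e :
  simple_left_ideal L -> L e -> (forall r, GRing.comm e r) ->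
  forall r, e * r = 0 \/ exists c, e = c * (e * r).
Proof.
move=> L_simple Le e_central r.
case: (classic (e * r = 0)) => [|er_neq0]; first by left.
right; apply: (simple_left_ideal_cyclic L_simple) => //.
by rewrite e_central; have [[_ _ LM] _ _] := L_simple; apply: LM.
Qed.

End LeftIdeals.

Section CompletelyPrime.
Variables (R : pzRingType) (M : lmodType R).
Implicit Types (N P : M -> Prop) (r : R) (m x : M).

Lemma completely_prime_pow P r k m :
  completely_prime P -> P (r ^+ k *: m) -> P (r *: m).
Proof.
case=> [[_ _ PZ] _ P_prime]; elim: k m => [|k IHk] m.
  by rewrite expr0 scale1r; apply: PZ.
rewrite exprS -scalerA => /P_prime [/IHk | ] //; apply.
Qed.

Lemma gen_E_M_sub_beta_co N x : gen_submodule (E_M N) x -> beta_co N x.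
Proof.
move=> genE P P_prime N_sub_P; apply: genE; first by case: P_prime.
by move=> _ [r [m [k [-> Nrkm]]]]; apply: (completely_prime_pow (k := k)) => //; apply: N_sub_P.
Qed.

Lemma completely_prime_scale_preimage N e m0 :
  is_submodule N -> (forall r, GRing.comm e r) ->
  (forall r, e * r = 0 \/ exists c, e = c * (e * r)) ->
  ~ N (e *: m0) -> completely_prime (fun m => N (e *: m)).
Proof.
move=> [N0 ND NZ] e_central e_dichotomy Nem0; split.
- split; first by rewrite scaler0.
    by move=> x y Nex Ney; rewrite scalerDr; apply: ND.
  by move=> r x Nex; rewrite scalerA e_central -scalerA; apply: NZ.
- by exists 1, m0; rewrite scale1r.
- move=> r m Nerm; case: (e_dichotomy r) => [er0 | [c ->]].
    by right => m'; rewrite scalerA er0 scale0r.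
  by left; rewrite -!scalerA; apply: NZ.
Qed.

End CompletelyPrime.

Section UnitDecomposition.
Variables (R : pzRingType) (J : Type) (L : J -> R -> Prop).
Hypothesis L_simple : forall j, simple_left_ideal (L j).
Hypothesis L_independent : forall (s : list J) (x : J -> R),
  List.NoDup s -> (forall j, List.In j s -> L j (x j)) ->
  \sum_(j <- s) x j = 0 -> forall j, List.In j s -> x j = 0.
Variables (s : list J) (e : J -> R).
Hypotheses (s_uniq : List.NoDup s) (e_in_L : forall j, List.In j s -> L j (e j)).
Hypothesis sum_e : 1 = \sum_(j <- s) e j.

Lemma decomposition_unique (x y : J -> R) :
  (forall j, List.In j s -> L j (x j)) -> (forall j, List.In j s -> L j (y j)) ->
  \sum_(j <- s) x j = \sum_(j <- s) y j -> forall j, List.In j s -> x j = y j.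
Proof.
move=> xL yL sum_xy j sj; apply: subr0_eq.
apply: (L_independent (x := fun j => x j - y j) s_uniq _ _ sj).
  move=> k sk; have [Lk _ _] := L_simple k; exact: left_idealB Lk (xL _ sk) (yL _ sk).
by rewrite sumrB sum_xy subrr.
Qed.

Lemma decomposition_idempotent i : List.In i s -> e i * e i = e i.
Proof.
move=> si; pose delta j := if excluded_middle_informative (j = i) then e i else 0.
have eie_L j : List.In j s -> L j (e i * e j).
  by move=> sj; have [[_ _ LM] _ _] := L_simple j; apply/LM/e_in_L.
have delta_L j : List.In j s -> L j (delta j).
  move=> sj; rewrite /delta; case: (excluded_middle_informative (j = i)) => ji /=.
    by subst j; apply: e_in_L.
  by have [[L0 _ _] _ _] := L_simple j.
have delta_i : delta i = e i by rewrite /delta; case: excluded_middle_informative.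
rewrite -[RHS]delta_i; apply: (decomposition_unique eie_L delta_L _ si).
by rewrite -mulr_sumr -sum_e mulr1 big_delta_In.
Qed.

Lemma two_primal_reduced : two_primal R -> reduced R.
Proof.
move=> R_two_primal a /R_two_primal a_rad; rewrite -(mulr1 a) sum_e mulr_sumr.
by apply: big1_In => j sj; apply: (a_rad _ (left_ann_simple_prime (L_simple j))); apply: e_in_L.
Qed.

Lemma beta_co_sub (M : lmodType R) (N : M -> Prop) x :
  two_primal R -> is_submodule N -> beta_co N x -> N x.
Proof.
move=> R_two_primal N_sub x_beta; have [N0 ND NZ] := N_sub.
have Nex j : List.In j s -> N (e j *: x).
  move=> sj; apply: NNPP => Nejx.
  have e_central := reduced_idempotent_central (two_primal_reduced R_two_primal)
    (decomposition_idempotent sj).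
  have e_dichotomy := central_simple_left_ideal_dichotomy (L_simple j) (e_in_L sj) e_central.
  apply/Nejx/(x_beta (fun m => N (e j *: m))) => [|y Ny]; last exact: NZ.
  exact: completely_prime_scale_preimage e_dichotomy Nejx.
by rewrite -[x]scale1r sum_e scaler_suml; apply: big_ind_In.
Qed.

End UnitDecomposition.

Theorem corollary4p24 (R : pzRingType) :
  semisimple_ring R -> two_primal R -> complete_radical_formula R.
Proof.
move=> [J [L [L_simple [L_span L_independent]]]] R_two_primal M N N_sub x.
have [s [e [s_uniq [e_in_L sum_e]]]] := L_span 1.
split; first exact: gen_E_M_sub_beta_co.
move=> /(beta_co_sub L_simple L_independent s_uniq e_in_L sum_e R_two_primal N_sub) Nx.
by move=> P _; apply; exists 1, x, 0%N; rewrite expr0 !scale1r.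
Qed.
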